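(* Let $A$ be a C*-algebra and $D$ a modular maximal right ideal of $A$. Regard $A$ as a right Hilbert $A$-module with $\langle a,b\rangle=a^*b$ and $D\subseteq A$ as a Hilbert $A$-submodule. Then every bounded $A$-linear map $r:D^{\perp\perp}\to A$ which vanishes on $D$ is the zero map, where $D^{\perp\perp}$ is the biorthogonal complement of $D$ in $A$.
   Context: A right ideal $D$ of $A$ is modular if there exists $u\in A$ with $a-ua\in D$ for all $a\in A$; it is maximal if it is a proper right ideal not contained in any larger proper right ideal. For $S\subseteq A$, $S^\perp=\{b\in A: s^*b=0\ \forall s\in S\}$ and $S^{\perp\perp}=(S^\perp)^\perp$. *)

From HB Require Import structures.
From mathcomp Require Import all_boot all_order all_algebra.
From mathcomp Require Import complex.
From mathcomp Require Import all_classical all_reals all_analysis.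
Set Implicit Arguments. Unset Strict Implicit. Unset Printing Implicit Defensive.
Import Order.TTheory GRing.Theory Num.Theory ComplexField.
Import numFieldNormedType.Exports.
Local Open Scope classical_set_scope.
Local Open Scope ring_scope.

Definition is_cstar_algebra (R : realType) (A : completeNormedModType R[i])
    (mul : A -> A -> A) (star : A -> A) : Prop :=
  (forall a b c, mul (mul a b) c = mul a (mul b c))
  /\ (forall a b c, mul (a + b) c = mul a c + mul b c)
  /\ (forall a b c, mul a (b + c) = mul a b + mul a c)
  /\ (forall (k : R[i]) a b, mul (k *: a) b = k *: mul a b)
  /\ (forall (k : R[i]) a b, mul a (k *: b) = k *: mul a b)
  /\ (forall a b, star (a + b) = star a + star b)
  /\ (forall (k : R[i]) a, star (k *: a) = (k^*)%C *: star a)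
  /\ (forall a, star (star a) = a)
  /\ (forall a b, star (mul a b) = mul (star b) (star a))
  /\ (forall a b, `|mul a b| <= `|a| * `|b|)
  /\ (forall a, `|mul (star a) a| = `|a| ^+ 2).

Definition right_ideal (R : realType) (A : completeNormedModType R[i])
    (mul : A -> A -> A) (D : set A) : Prop :=
  [/\ D 0,
      (forall x y, D x -> D y -> D (x + y)),
      (forall (k : R[i]) x, D x -> D (k *: x)) &
      (forall x a, D x -> D (mul x a))].

Definition modular_right_ideal (R : realType) (A : completeNormedModType R[i])
    (mul : A -> A -> A) (D : set A) : Prop :=
  right_ideal mul D /\ exists u : A, forall a : A, D (a - mul u a).

Definition maximal_right_ideal (R : realType) (A : completeNormedModType R[i])
    (mul : A -> A -> A) (D : set A) : Prop :=
  [/\ right_ideal mul D, D != setT &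
      forall E : set A, right_ideal mul E -> E != setT -> D `<=` E -> E = D].

(* Orthogonal complement in A regarded as a right Hilbert A-module with
   <a, b> = a^* b. *)
Definition perp (R : realType) (A : completeNormedModType R[i])
    (mul : A -> A -> A) (star : A -> A) (S : set A) : set A :=
  [set b | forall s, S s -> mul (star s) b = 0].

(* A bounded A-linear map defined on the submodule M, represented by a
   function r : A -> A whose values outside M are irrelevant. *)
Definition bounded_Alinear_on (R : realType) (A : completeNormedModType R[i])
    (mul : A -> A -> A) (M : set A) (r : A -> A) : Prop :=
  [/\ (forall x y, M x -> M y -> r (x + y) = r x + r y),
      (forall (k : R[i]) x, M x -> r (k *: x) = k *: r x),
      (forall x a, M x -> r (mul x a) = mul (r x) a) &
      exists C : R[i], forall x, M x -> `|r x| <= C * `|x|].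

From HB Require Import structures.
From mathcomp Require Import all_boot all_order all_algebra.
From mathcomp Require Import complex.
From mathcomp Require Import all_classical all_reals all_analysis.
Import Order.TTheory GRing.Theory Num.Theory ComplexField.
Import numFieldNormedType.Exports.
Local Open Scope classical_set_scope.
Local Open Scope ring_scope.
Set Implicit Arguments.
Unset Strict Implicit.

(* Since D is maximal and D^perpperp is a right ideal containing D, either
   D^perpperp = D, and there is nothing to prove, or D^perpperp = A.  In the
   second case r is A-linear on all of A, so the modular unit u gives
   r a = r (a - u a) + r (u a) = (r u) a, i.e. r is left multiplication by
   c := r u.  Then c annihilates D, so c^* lies in D^perp; as c^* also lies in
   D^perpperp = A, we get c c^* = 0, and the C*-identity forces c = 0. *)

Lemma addr_self_eq0 (V : zmodType) (z : V) : z = z + z -> z = 0.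
Proof. by move=> h; apply: (@addrI _ z); rewrite addr0 -h. Qed.

Lemma left_mul_of_modular_unit (V : zmodType) (mul : V -> V -> V)
    (D : set V) (u : V) (r : V -> V) :
  (forall x y, r (x + y) = r x + r y) ->
  (forall x a, r (mul x a) = mul (r x) a) ->
  (forall a, D (a - mul u a)) ->
  (forall d, D d -> r d = 0) ->
  forall a, r a = mul (r u) a.
Proof.
move=> rD rM Du r0 a.
by rewrite -[a in LHS](subrK (mul u a)) rD r0 // add0r rM.
Qed.

Section BiorthogonalComplement.

Variables (R : realType) (A : completeNormedModType R[i]).
Variables (mul : A -> A -> A) (star : A -> A).

Hypothesis mulA : forall a b c, mul (mul a b) c = mul a (mul b c).
Hypothesis mulDl : forall a b c, mul (a + b) c = mul a c + mul b c.
Hypothesis mulDr : forall a b c, mul a (b + c) = mul a b + mul a c.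
Hypothesis mulZr : forall (k : R[i]) a b, mul a (k *: b) = k *: mul a b.
Hypothesis starD : forall a b, star (a + b) = star a + star b.
Hypothesis starK : forall a, star (star a) = a.
Hypothesis starM : forall a b, star (mul a b) = mul (star b) (star a).
Hypothesis cstar_identity : forall a, `|mul (star a) a| = `|a| ^+ 2.

Let mul0a a : mul 0 a = 0.
Proof. by apply: addr_self_eq0; rewrite -mulDl addr0. Qed.

Let mula0 a : mul a 0 = 0.
Proof. by apply: addr_self_eq0; rewrite -mulDr addr0. Qed.

Let star0 : star 0 = 0.
Proof. by apply: addr_self_eq0; rewrite -starD addr0. Qed.

Lemma right_ideal_perp (S : set A) : right_ideal mul (perp mul star S).
Proof.
split.
- by move=> s _; rewrite mula0.
- by move=> a b Pa Pb s Ss; rewrite mulDr Pa // Pb // addr0.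
- by move=> k a Pa s Ss; rewrite mulZr Pa // scaler0.
- by move=> a b Pa s Ss; rewrite -mulA Pa // mul0a.
Qed.

Lemma sub_biperp (S : set A) : S `<=` perp mul star (perp mul star S).
Proof. by move=> a Sa b Pb; rewrite -[a]starK -starM Pb // star0. Qed.

Lemma maximal_biperp (D : set A) : maximal_right_ideal mul D ->
  perp mul star (perp mul star D) = D \/ perp mul star (perp mul star D) = setT.
Proof.
move=> [_ _ Dmax]; have [PT|PnT] := pselect (perp mul star (perp mul star D) = setT).
  by right.
by left; apply: Dmax; [exact: right_ideal_perp | apply/eqP | exact: sub_biperp].
Qed.

Lemma cstar_eq0 a : mul (star a) a = 0 -> a = 0.
Proof.
move=> h; have /esym/eqP := cstar_identity a; rewrite h normr0.
by rewrite expf_eq0 /= normr_eq0 => /eqP.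
Qed.

Lemma left_annihilator_eq0 (S : set A) (c : A) :
  perp mul star (perp mul star S) (star c) ->
  (forall s, S s -> mul c s = 0) -> c = 0.
Proof.
move=> Pc cS.
have Sc : perp mul star S (star c) by move=> s Ss; rewrite -starM cS // star0.
have /cstar_eq0 c0 : mul (star (star c)) (star c) = 0 by exact: Pc.
by rewrite -[c]starK c0 star0.
Qed.

End BiorthogonalComplement.

Theorem theorem5p1 (R : realType) (A : completeNormedModType R[i])
    (mul : A -> A -> A) (star : A -> A) (D : set A) (r : A -> A) :
  is_cstar_algebra mul star ->
  modular_right_ideal mul D ->
  maximal_right_ideal mul D ->
  bounded_Alinear_on mul (perp mul star (perp mul star D)) r ->
  (forall d, D d -> r d = 0) ->
  forall x, perp mul star (perp mul star D) x -> r x = 0.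
Proof.
move=> [mulA [mulDl [mulDr [_ [mulZr [starD [_ [starK [starM [_ cstar]]]]]]]]]].
move=> [_ [u Du]] Dmax [rD _ rM _] r0 x Px.
have [PD|PT] := maximal_biperp mulA mulDl mulDr mulZr starD starK starM Dmax.
  by apply: r0; rewrite -PD.
have rA : forall a, r a = mul (r u) a.
  by apply: (left_mul_of_modular_unit (D := D)) => [a b|a b|//|//];
    [apply: rD | apply: rM]; rewrite PT.
have c0 : r u = 0.
  apply: (left_annihilator_eq0 starD starK starM cstar (S := D)).
    by rewrite PT.
  by move=> d Dd; rewrite -rA r0.
have mul0a : mul 0 x = 0 by apply: addr_self_eq0; rewrite -mulDl addr0.
by rewrite rA c0 mul0a.
Qed.
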